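(* Let $X$ be a Banach lattice, $(e_n)$ a semi-normalized basic sequence in $X$ with closed span $E$ and biorthogonal functionals $e_n^*\in E^*$, and let $C>0$. The following are equivalent. (i) For all $x\in E$, all $m\in\mathbb{N}$ and all greedy orderings $\pi$ of $x$, $\|G^\vee_{\pi,m}(x)\|\le C\|x\|$. (ii) For all $x\in E$ and all $m\in\mathbb{N}$, $\|\mathcal{G}^\vee_m(x)\|\le C\|x\|$. (iii) For all $x\in E$ and all $m\in\mathbb{N}$ there exists a greedy ordering $\pi$ of $x$ with $\|G^\vee_{\pi,m}(x)\|\le C\|x\|$. (iv) $\|\mathcal{G}^\vee_{|\mathrm{supp}(x)|}(x)\|\le C\|x\|$ whenever $x\in E$ has finite support and $\mathcal{G}_{|\mathrm{supp}(x)|}(x)$ is a lattice strictly greedy sum of $x$. (v) $\|\mathcal{G}^\vee_{|\mathrm{supp}(x)|}(x)\|\le C\|x\|$ for all $x\in E$ of finite support. Furthermore, the least $C$ for which these estimates hold is $\sup_m\|\mathcal{G}^\vee_m\|$, where $\|\mathcal{G}^\vee_m\|=\sup\{\|\mathcal{G}^\vee_m(x)\|: x\in E,\ \|x\|=1\}$.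
   Context: $\mathrm{supp}(x)=\{n: e_n^*(x)\neq0\}$. A greedy ordering of $x\in E$ is an injective map $\pi:\mathbb{N}\to\mathbb{N}$ with $\mathrm{supp}(x)\subseteq\pi(\mathbb{N})$ and $(|e^*_{\pi(n)}(x)|)_n$ non-increasing. $G_{\pi,m}(x)=\sum_{n=1}^m e^*_{\pi(n)}(x)e_{\pi(n)}$ and $G^\vee_{\pi,m}(x)=\bigvee_{n=1}^m|G_{\pi,n}(x)|$. The natural greedy ordering $\rho$ of $x$ is the greedy ordering in which ties $|e^*_{\rho(j)}(x)|=|e^*_{\rho(k)}(x)|$ with $j<k$ satisfy $\rho(j)<\rho(k)$; $\mathcal{G}_m(x)=G_{\rho,m}(x)$ and $\mathcal{G}^\vee_m(x)=\bigvee_{n=1}^m|\mathcal{G}_n(x)|$. $G_{\pi,m}(x)$ is a lattice strictly greedy sum of $x$ of order $m$ if $|e^*_{\pi(i)}(x)|\ne|e^*_{\pi(j)}(x)|$ for all distinct $i,j\in\{1,\dots,m\}$ with $e^*_{\pi(i)}(x)\ne0$. *)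

From HB Require Import structures.
From mathcomp Require Import all_boot all_order all_algebra.
From mathcomp Require Import all_classical all_reals all_analysis.
From Stdlib Require Import ClassicalEpsilon.
Set Implicit Arguments. Unset Strict Implicit. Unset Printing Implicit Defensive.
Import Order.TTheory GRing.Theory Num.Theory.
Import numFieldNormedType.Exports.
Local Open Scope classical_set_scope.
Local Open Scope ring_scope.

Section Defs.
Variables (R : realType) (X : normedModType R).

Definition labs (join : X -> X -> X) (x : X) : X := join x (- x).

(* Completeness of X is
   imposed separately by taking X : completeNormedModType R. *)
Definition normed_lattice (le : X -> X -> Prop) (join : X -> X -> X) : Prop :=
  [/\ [/\ (forall x, le x x),
      (forall x y, le x y -> le y x -> x = y) &
      (forall x y z, le x y -> le y z -> le x z)],
      (forall x y z, le x y -> le (x + z) (y + z)),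
      (forall (a : R) x y, 0 <= a -> le x y -> le (a *: x) (a *: y)),
      (forall x y, [/\ le x (join x y), le y (join x y) &
                      forall z, le x z -> le y z -> le (join x y) z]) &
      (forall x y, le (labs join x) (labs join y) -> `|x| <= `|y|)].

Definition closed_span (e : nat -> X) : set X :=
  closure [set x | exists (n : nat) (a : nat -> R), x = \sum_(i < n) a i *: e i].

Definition semi_normalized (e : nat -> X) : Prop :=
  exists a b : R, 0 < a /\ forall n, a <= `|e n| <= b.

Definition basic_seq (e : nat -> X) : Prop :=
  forall x, closed_span e x ->
    exists a : nat -> R,
      ((fun m => \sum_(k < m) a k *: e k) @ \oo --> x) /\
      forall b : nat -> R, ((fun m => \sum_(k < m) b k *: e k) @ \oo --> x) -> a = b.

Definition coefficient_functionals (e : nat -> X) (estar : nat -> X -> R) : Prop :=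
  forall x, closed_span e x ->
    (fun m => \sum_(k < m) estar k x *: e k) @ \oo --> x.

Variables (e : nat -> X) (estar : nat -> X -> R).

Definition greedy_ordering (x : X) (pi : nat -> nat) : Prop :=
  [/\ injective pi,
      (forall n, estar n x != 0 -> exists k, pi k = n) &
      (forall j k, (j <= k)%N -> `|estar (pi k) x| <= `|estar (pi j) x|)].

Definition natural_greedy_ordering (x : X) (rho : nat -> nat) : Prop :=
  greedy_ordering x rho /\
  forall j k, (j < k)%N -> `|estar (rho j) x| = `|estar (rho k) x| ->
    (rho j < rho k)%N.

(* G_{pi,m}(x) ; indices of the ordering start at 0 *)
Definition Gsum (pi : nat -> nat) (m : nat) (x : X) : X :=
  \sum_(n < m) estar (pi n) x *: e (pi n).

(* G^vee_{pi,m}(x) = \/_{n=1}^m |G_{pi,n}(x)|  (join taken starting from 0,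
   harmless since every |.| >= 0) *)
Definition Gvee (join : X -> X -> X) (pi : nat -> nat) (m : nat) (x : X) : X :=
  foldr (fun n acc => join (labs join (Gsum pi n.+1 x)) acc) 0 (iota 0 m).

(* the natural greedy ordering of x (chosen; all choices give the same sums) *)
Definition nat_greedy (x : X) : nat -> nat :=
  epsilon (inhabits id) (natural_greedy_ordering x).

Definition NG (m : nat) (x : X) : X := Gsum (nat_greedy x) m x.
Definition NGvee (join : X -> X -> X) (m : nat) (x : X) : X :=
  Gvee join (nat_greedy x) m x.

Definition lattice_strictly_greedy (pi : nat -> nat) (m : nat) (x : X) : Prop :=
  forall i j, (i < m)%N -> (j < m)%N -> i <> j -> estar (pi i) x != 0 ->
    `|estar (pi i) x| != `|estar (pi j) x|.

End Defs.

From Pilot Require Import Defs.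
From HB Require Import structures.
From mathcomp Require Import all_boot all_order all_algebra.
From mathcomp Require Import all_classical all_reals all_analysis.
From mathcomp Require Import lra zify ring.
From Stdlib Require Import ClassicalEpsilon.
Import Order.TTheory GRing.Theory Num.Theory.
Import numFieldNormedType.Exports.
Local Open Scope classical_set_scope.
Local Open Scope ring_scope.
Set Implicit Arguments. Unset Strict Implicit. Unset Printing Implicit Defensive.

(* For (iii) => (iv): if the first
   |supp x| terms of the natural greedy ordering of x have distinct moduli,
   every greedy ordering of x starts with the same terms.
   (iv) => (v) and (v) => (i) rest on one perturbation. Given a greedy ordering
   pi of x and m, truncate x far out and push its coefficients at
   pi 0, ..., pi (m-1) away from 0 by small, strictly decreasing amounts. The
   resulting y is finitely supported and close to x, its natural greedy
   ordering starts with pi 0, ..., pi (m-1) without ties, and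
   G^vee_{pi,m}(y) is close to G^vee_{pi,m}(x) because join and modulus are
   1-Lipschitz in a normed lattice. Since |G^vee_m(y)| is non-decreasing in m,
   the bound at m = |supp y| controls the one at m, and letting the
   perturbation vanish gives (i). The supremum formula holds because G^vee_m
   is positively homogeneous. *)

Section NormedLattice.
Variables (R : realType) (X : normedModType R) (le : X -> X -> Prop)
  (join : X -> X -> X).
Hypothesis HL : normed_lattice le join.
Local Notation labs := (labs join).

Lemma lat_refl x : le x x.
Proof. by case: HL => -[]. Qed.

Lemma lat_anti x y : le x y -> le y x -> x = y.
Proof. by case: HL => -[_ anti _] *; apply: anti. Qed.

Lemma lat_trans y x z : le x y -> le y z -> le x z.
Proof. by case: HL => -[_ _ trans] _ _ _ _ xy yz; apply: trans xy yz. Qed.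

Lemma lat_addr z x y : le x y -> le (x + z) (y + z).
Proof. by case: HL => _ addr *; apply: addr. Qed.

Lemma lat_scale (a : R) x y : 0 <= a -> le x y -> le (a *: x) (a *: y).
Proof. by case: HL => _ _ scale *; apply: scale. Qed.

Lemma lat_joinl x y : le x (join x y).
Proof. by case: HL => _ _ _ /(_ x y) []. Qed.

Lemma lat_joinr x y : le y (join x y).
Proof. by case: HL => _ _ _ /(_ x y) []. Qed.

Lemma lat_join_lub x y z : le x z -> le y z -> le (join x y) z.
Proof. by case: HL => _ _ _ /(_ x y) [_ _ lub] _; apply: lub. Qed.

Lemma lat_norm x y : le (labs x) (labs y) -> `|x| <= `|y|.
Proof. by case: HL => _ _ _ _ norm; apply: norm. Qed.

Lemma lat_add a b c d : le a b -> le c d -> le (a + c) (b + d).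
Proof.
move=> ab cd; apply: lat_trans (lat_addr c ab) _.
by rewrite [b + c]addrC [b + d]addrC; apply: lat_addr.
Qed.

Lemma lat_subl a b w : le a (w + b) -> le (a - b) w.
Proof. by move=> /(lat_addr (- b)); rewrite addrK. Qed.

Lemma lat_opp a b : le a b -> le (- b) (- a).
Proof. by move=> /(lat_addr (- a - b)); rewrite addrA subrr add0r addrCA subrr addr0. Qed.

Lemma lat_joinC a b : join a b = join b a.
Proof.
by apply: lat_anti; apply: lat_join_lub; (apply: lat_joinl || apply: lat_joinr).
Qed.

Lemma lat_joinxx a : join a a = a.
Proof. by apply: lat_anti; [apply: lat_join_lub; apply: lat_refl | apply: lat_joinl]. Qed.

Lemma joinZ (r : R) a b : 0 < r -> join (r *: a) (r *: b) = r *: join a b.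
Proof.
move=> r_gt0; have r_neq0 := lt0r_neq0 r_gt0.
apply: lat_anti; first by apply: lat_join_lub; apply: lat_scale (ltW r_gt0) _;
  [apply: lat_joinl | apply: lat_joinr].
rewrite -[X in le _ X]scale1r -(mulfV r_neq0) -scalerA.
apply: lat_scale (ltW r_gt0) _.
by apply: lat_join_lub; rewrite -[X in le X _]scale1r -(mulVf r_neq0) -scalerA;
  apply: lat_scale; rewrite ?invr_ge0 ?ltW //; [apply: lat_joinl | apply: lat_joinr].
Qed.

Lemma labsN z : labs (- z) = labs z.
Proof. by rewrite /labs opprK lat_joinC. Qed.

Lemma labsZ (r : R) z : 0 < r -> labs (r *: z) = r *: labs z.
Proof. by move=> r_gt0; rewrite /labs -scalerN joinZ. Qed.

Lemma labs_ge0 z : le 0 (labs z).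
Proof.
have : le 0 (2^-1 *: (labs z + labs z)).
  rewrite -(scaler0 _ 2^-1); apply: lat_scale; first by rewrite invr_ge0.
  by rewrite -(subrr z); apply: lat_add; [apply: lat_joinl | apply: lat_joinr].
have -> : labs z + labs z = 2 *: labs z by rewrite scaler_nat mulr2n.
by rewrite scalerA mulVf // scale1r.
Qed.

Lemma labs_id z : le 0 z -> labs z = z.
Proof.
move=> z_ge0; apply: lat_anti; last exact: lat_joinl.
apply: lat_join_lub; first exact: lat_refl.
have := lat_opp z_ge0; rewrite oppr0 => Nz_le0; exact: lat_trans Nz_le0 z_ge0.
Qed.

Lemma lat_norm_mono z w : le 0 z -> le z w -> `|z| <= `|w|.
Proof.
move=> z_ge0 zw; apply: lat_norm.
by rewrite labs_id // labs_id //; apply: lat_trans z_ge0 zw.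
Qed.

Lemma ler_norm_labs D z : le D (labs z) -> le (- D) (labs z) -> `|D| <= `|z|.
Proof. by move=> Dz NDz; apply: lat_norm; apply: lat_join_lub. Qed.

Lemma lat_joinBl a b c : le (join a b - join c b) (labs (a - c)).
Proof.
apply: lat_subl; apply: lat_join_lub.
  by rewrite -{1}(subrK c a); apply: lat_add; apply: lat_joinl.
by rewrite -{1}(add0r b); apply: lat_add; [apply: labs_ge0 | apply: lat_joinr].
Qed.

Lemma norm_joinBl a b c : `|join a b - join c b| <= `|a - c|.
Proof.
apply: ler_norm_labs; first exact: lat_joinBl.
by rewrite opprB -labsN opprB; apply: lat_joinBl.
Qed.

Lemma norm_joinBr a b c : `|join b a - join b c| <= `|a - c|.
Proof. by rewrite ![join b _]lat_joinC; apply: norm_joinBl. Qed.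

Lemma lat_labsB u v : le (labs u - labs v) (labs (u - v)).
Proof.
apply: lat_subl; apply: lat_join_lub.
  by rewrite -{1}(subrK v u); apply: lat_add; apply: lat_joinl.
have -> : - u = - (u - v) + - v by rewrite -opprD subrK.
by apply: lat_add; apply: lat_joinr.
Qed.

Lemma norm_labsB u v : `|labs u - labs v| <= `|u - v|.
Proof.
apply: ler_norm_labs; first exact: lat_labsB.
by rewrite opprB -(labsN (u - v)) opprB; apply: lat_labsB.
Qed.

Definition bigjoin_abs (u : nat -> X) (l : seq nat) : X :=
  foldr (fun n acc => join (labs (u n)) acc) 0 l.

Lemma eq_bigjoin_abs u v l :
  {in l, u =1 v} -> bigjoin_abs u l = bigjoin_abs v l.
Proof.
elim: l => //= n l IH uv; rewrite uv ?mem_head // IH // => k lk.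
by apply: uv; rewrite in_cons lk orbT.
Qed.

Lemma bigjoin_abs_ge0 u l : le 0 (bigjoin_abs u l).
Proof.
elim: l => [|n l IH] /=; first exact: lat_refl.
by apply: lat_trans IH _; apply: lat_joinr.
Qed.

Lemma norm_bigjoin_absB u v l (K : R) :
  {in l, forall n, `|u n - v n| <= K} ->
  `|bigjoin_abs u l - bigjoin_abs v l| <= (size l)%:R * K.
Proof.
elim: l => [|n l IH] uv /=; first by rewrite subrr normr0 mul0r.
rewrite -[in X in _ <= X]addn1 natrD mulrDl mul1r.
apply: le_trans (ler_distD (join (labs (v n)) (bigjoin_abs u l)) _ _) _.
rewrite addrC lerD //.
  apply: le_trans (norm_joinBr _ _ _) _.
  by apply: IH => k lk; apply: uv; rewrite in_cons lk orbT.
apply: le_trans (norm_joinBl _ _ _) _; apply: le_trans (norm_labsB _ _) _.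
by apply: uv; rewrite mem_head.
Qed.

Lemma norm_bigjoin_abs_iota u m M : (m <= M)%N ->
  `|bigjoin_abs u (iota 0 m)| <= `|bigjoin_abs u (iota 0 M)|.
Proof.
move=> mM; rewrite -(subnKC mM) iotaD /bigjoin_abs foldr_cat.
apply: lat_norm_mono; first exact: bigjoin_abs_ge0.
elim: (iota 0 m) => [|n l IH] /=; first exact: bigjoin_abs_ge0.
by apply: lat_join_lub; [apply: lat_joinl | apply: lat_trans IH _; apply: lat_joinr].
Qed.

Lemma bigjoin_absZ (r : R) u l : 0 < r ->
  bigjoin_abs (fun n => r *: u n) l = r *: bigjoin_abs u l.
Proof.
move=> r_gt0; elim: l => [|n l IH] /=; first by rewrite scaler0.
by rewrite [bigjoin_abs _ l]IH labsZ // joinZ.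
Qed.

Lemma bigjoin_abs0 l : bigjoin_abs (fun=> 0) l = 0.
Proof.
elim: l => [|n l IH] //=.
by rewrite [bigjoin_abs _ l]IH /Defs.labs oppr0 !lat_joinxx.
Qed.

End NormedLattice.

Section Coefficients.
Variables (R : realType) (X : normedModType R) (e : nat -> X)
  (estar : nat -> X -> R).
Hypotheses (Hb : basic_seq e) (Hcf : coefficient_functionals e estar).

Lemma closed_span_sum (a : nat -> R) N : closed_span e (\sum_(k < N) a k *: e k).
Proof. by apply: subset_closure; exists N, a. Qed.

Lemma estar_unique x (a : nat -> R) : closed_span e x ->
  (fun m => \sum_(k < m) a k *: e k) @ \oo --> x -> forall k, a k = estar k x.
Proof.
move=> Ex a_x k; have [a0 [_ uniq_x]] := Hb Ex.
by rewrite -(uniq_x _ a_x) (uniq_x (fun k => estar k x) (Hcf Ex)).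
Qed.

Lemma estar_sum (a : nat -> R) N k :
  estar k (\sum_(i < N) a i *: e i) = if (k < N)%N then a k else 0.
Proof.
pose b i := if (i < N)%N then a i else 0.
rewrite -/(b k); symmetry; apply: estar_unique; first exact: closed_span_sum.
apply: cvg_near_cst; exists N => // n /= Nn.
rewrite (big_ord_widen n (fun i => a i *: e i) Nn).
rewrite (bigID (fun i : 'I_n => (i < N)%N)) /= [X in _ + X]big1 ?addr0.
  by apply: eq_bigr => i iN; rewrite /b iN.
by move=> i /negbTE iN; rewrite /b iN scale0r.
Qed.

Lemma estar0 k : estar k 0 = 0.
Proof. by have := estar_sum (fun=> 0) 0 k; rewrite big_ord0. Qed.

Lemma partial_sumsZ (r : R) x : closed_span e x ->
  (fun m => \sum_(k < m) (r * estar k x) *: e k) @ \oo --> r *: x.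
Proof.
move=> Ex; under eq_fun do under eq_bigr do rewrite -scalerA.
under eq_fun do rewrite -scaler_sumr.
exact: cvgZl_tmp (Hcf Ex).
Qed.

Lemma closed_spanZ (r : R) x : closed_span e x -> closed_span e (r *: x).
Proof.
move=> Ex; have closedE : closed (closed_span e) by apply: closed_closure.
apply: (closed_cvg _ closedE _ _ (partial_sumsZ (r := r) Ex)).
by exists 0%N => // n _; apply: (closed_span_sum (a := fun k => r * estar k x)).
Qed.

Lemma estarZ (r : R) x k : closed_span e x -> estar k (r *: x) = r * estar k x.
Proof.
move=> Ex; symmetry; apply: (estar_unique (a := fun k => r * estar k x)).
  exact: closed_spanZ.
exact: partial_sumsZ.
Qed.

Lemma estar_small x : semi_normalized e -> closed_span e x ->
  forall r : R, 0 < r -> exists N, forall k, (N <= k)%N -> `|estar k x| < r.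
Proof.
move=> [a [b [a_gt0 e_bd]]] Ex r r_gt0.
have ra_gt0 : 0 < r * a / 2 by rewrite divr_gt0 // mulr_gt0.
have /cvgrPdist_lt /(_ _ ra_gt0) [N _ near_x] := Hcf Ex.
exists N => k Nk; have := near_x k Nk; have := near_x k.+1 (leqW Nk).
rewrite /= big_ord_recr /=; set S := \sum_(i < k) _ => dSk1 dSk.
have : `|estar k x *: e k| < r * a.
  have -> : estar k x *: e k = (x - S) - (x - (S + estar k x *: e k)).
    by rewrite opprB addrA addrA subrK (addrC x) addrK.
  by apply: le_lt_trans (ler_normB _ _) _; rewrite [r * a]splitr ltrD // distrC.
rewrite normrZ; have /andP [a_le_ek _] := e_bd k.
by move=> /(le_lt_trans (ler_wpM2l (normr_ge0 _) a_le_ek)); rewrite ltr_pM2r.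
Qed.

End Coefficients.

Lemma exists_notin (l : seq nat) : exists n, n \notin l.
Proof.
have le_max n : n \in l -> (n <= \max_(i <- l) i)%N.
  by move=> nl; apply: (leq_bigmax_seq (F := id)).
by exists (\max_(i <- l) i).+1; apply/negP => /le_max; rewrite ltnn.
Qed.

Section NaturalGreedyConstruction.
Variables (R : realType) (c : nat -> R).
Hypothesis c_small :
  forall r : R, 0 < r -> exists N, forall k, (N <= k)%N -> `|c k| < r.

Definition greedy_before i j :=
  `|c j| < `|c i| \/ `|c i| = `|c j| /\ (i < j)%N.

Lemma greedy_before_le i j : greedy_before i j -> `|c j| <= `|c i|.
Proof. by case=> [/ltW | [-> _]]. Qed.

Lemma exists_max_abs (A : nat -> Prop) a : A a ->
  exists2 k, A k & forall j, A j -> `|c j| <= `|c k|.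
Proof.
move=> Aa; have [[b [Ab cb_neq0]] | c0] := pselect (exists b, A b /\ c b != 0);
  last first.
  exists a => // j Aj; have [->|cj_neq0] := eqVneq (c j) 0; first by rewrite normr0.
  by case: c0; exists j.
have cb_gt0 : 0 < `|c b| by rewrite normr_gt0.
have [N small] := c_small cb_gt0.
have bN : (b < N)%N by rewrite ltnNge; apply/negP => /small; rewrite ltxx.
pose P := fun i : 'I_N => `[< A i >].
have Pb : P (Ordinal bN) by apply/asboolP.
have [k /asboolP Ak k_max] := arg_maxP (fun i : 'I_N => `|c i|) Pb.
exists k => // j Aj; have [jN | /small cj] := ltnP j N.
  by apply: (k_max (Ordinal jN)); apply/asboolP.
by apply: le_trans (ltW cj) _; apply: (k_max (Ordinal bN)); apply/asboolP.
Qed.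

Lemma exists_greedy_first (A : nat -> Prop) a : A a ->
  exists2 i, A i & forall j, A j -> j <> i -> greedy_before i j.
Proof.
move=> Aa; have [k Ak k_max] := exists_max_abs Aa.
have ex_max : exists n, `[< A n /\ forall j, A j -> `|c j| <= `|c n| >].
  by exists k; apply/asboolP.
case: (ex_minnP ex_max) => i /asboolP [Ai i_max] i_min.
exists i => // j Aj ji; have := i_max j Aj.
rewrite le_eqVlt => /orP [/eqP cji | ]; last by left.
right; split; first by rewrite cji.
rewrite ltn_neqAle eq_sym (introF eqP ji) /=.
by apply: i_min; apply/asboolP; split => // j' Aj'; rewrite cji; apply: i_max.
Qed.

Definition greedy_next (l : seq nat) : nat :=
  epsilon (inhabits 0%N)
    (fun i => i \notin l /\ forall j, j \notin l -> j <> i -> greedy_before i j).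

Lemma greedy_nextP l : greedy_next l \notin l /\
  forall j, j \notin l -> j <> greedy_next l -> greedy_before (greedy_next l) j.
Proof.
apply: (epsilon_spec (inhabits 0%N)
  (fun i => i \notin l /\ forall j, j \notin l -> j <> i -> greedy_before i j)).
have [a al] := exists_notin l.
by have [i il i_first] := exists_greedy_first (A := fun k => k \notin l) al; exists i.
Qed.

Fixpoint greedy_picks n :=
  if n is n'.+1 then rcons (greedy_picks n') (greedy_next (greedy_picks n'))
  else [::].

Definition greedy_rho n := greedy_next (greedy_picks n).

Lemma greedy_picksE n : greedy_picks n = map greedy_rho (iota 0 n).
Proof.
elim: n => [//|n IH].
change (greedy_picks n.+1) with (rcons (greedy_picks n) (greedy_rho n)).
by rewrite -cats1 -addn1 iotaD map_cat -IH.
Qed.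

Lemma greedy_rho_neq j n : (j < n)%N -> greedy_rho j != greedy_rho n.
Proof.
move=> jn; have := proj1 (greedy_nextP (greedy_picks n)); rewrite -/(greedy_rho n).
by apply: contraNneq => <-; rewrite greedy_picksE map_f // mem_iota.
Qed.

Lemma greedy_rho_inj : injective greedy_rho.
Proof.
move=> j k rho_jk; case: (ltngtP j k) => // [jk | kj].
  by have := greedy_rho_neq jk; rewrite rho_jk eqxx.
by have := greedy_rho_neq kj; rewrite rho_jk eqxx.
Qed.

Lemma greedy_rho_before j k :
  (j < k)%N -> greedy_before (greedy_rho j) (greedy_rho k).
Proof.
move=> jk; apply: (proj2 (greedy_nextP (greedy_picks j))); last first.
  by apply/eqP; rewrite eq_sym greedy_rho_neq.
rewrite greedy_picksE; apply/mapP => -[i].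
rewrite mem_iota => /= ij /greedy_rho_inj ki.
by move: jk; rewrite ki ltnNge ltnW.
Qed.

Lemma greedy_rho_cover n : c n != 0 -> exists k, greedy_rho k = n.
Proof.
move=> cn_neq0; apply: contrapT => not_img.
have cn_gt0 : 0 < `|c n| by rewrite normr_gt0.
have [N small] := c_small cn_gt0.
have rho_lt k : (greedy_rho k < N)%N.
  rewrite ltnNge; apply/negP => /small; apply/negP; rewrite -leNgt.
  apply: greedy_before_le; apply: (proj2 (greedy_nextP (greedy_picks k))).
    by rewrite greedy_picksE; apply/mapP => -[i _ ni]; apply: not_img; exists i.
  by move=> rho_k; apply: not_img; exists k.
have : (size (map greedy_rho (iota 0 N.+1)) <= size (iota 0 N))%N.
  apply: uniq_leq_size; first by rewrite (map_inj_uniq greedy_rho_inj) iota_uniq.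
  by move=> _ /mapP [i _ ->]; rewrite mem_iota add0n rho_lt.
by rewrite size_map !size_iota ltnn.
Qed.

End NaturalGreedyConstruction.

Section GreedyOrderings.
Variables (R : realType) (X : normedModType R) (estar : nat -> X -> R).

(* [greedy_prefix x pi m]: G_{pi,m}(x) is a greedy sum of x; in the strict
   version it is the only one and its coefficients have distinct moduli. *)
Definition greedy_prefix (x : X) (pi : nat -> nat) (m : nat) : Prop :=
  (forall j k, (j <= k)%N -> (k < m)%N -> `|estar (pi k) x| <= `|estar (pi j) x|) /\
  (forall t, t \notin map pi (iota 0 m) -> forall j, (j < m)%N ->
     `|estar t x| <= `|estar (pi j) x|).

Definition strictly_greedy_prefix (x : X) (pi : nat -> nat) (m : nat) : Prop :=
  [/\ forall j, (j < m)%N -> estar (pi j) x != 0,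
      forall i j, (i < j)%N -> (j < m)%N -> `|estar (pi j) x| < `|estar (pi i) x| &
      forall t, t \notin map pi (iota 0 m) -> forall j, (j < m)%N ->
        `|estar t x| < `|estar (pi j) x|].

Lemma natural_greedy_ordering_exists x :
  (forall r : R, 0 < r -> exists N, forall k, (N <= k)%N -> `|estar k x| < r) ->
  exists rho, natural_greedy_ordering estar x rho.
Proof.
move=> small; pose c n := estar n x.
have before j k : (j < k)%N -> greedy_before c (greedy_rho c j) (greedy_rho c k).
  exact: greedy_rho_before.
exists (greedy_rho c); split; first split.
- exact: greedy_rho_inj.
- by move=> n; apply: greedy_rho_cover.
- move=> j k; rewrite leq_eqVlt => /predU1P [-> // | /before].
  exact: greedy_before_le.
- move=> j k /before [lt_kj eq_jk | [_ //]].
  by move: lt_kj; rewrite eq_jk ltxx.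
Qed.

Lemma natural_greedy_ordering_scale x y (r : R) rho : r != 0 ->
  (forall k, estar k y = r * estar k x) ->
  natural_greedy_ordering estar x rho -> natural_greedy_ordering estar y rho.
Proof.
move=> r_neq0 yx [[inj cover dec] nat].
have absE k : `|estar k y| = `|r| * `|estar k x| by rewrite yx normrM.
have r_gt0 : 0 < `|r| by rewrite normr_gt0.
split; first split => //.
- by move=> n; rewrite yx mulf_eq0 negb_or r_neq0; apply: cover.
- by move=> j k jk; rewrite !absE ler_pM2l //; apply: dec.
- by move=> j k jk; rewrite !absE => /(mulfI (lt0r_neq0 r_gt0)); apply: nat.
Qed.

Lemma greedy_ordering_prefix x pi m :
  greedy_ordering estar x pi -> greedy_prefix x pi m.
Proof.
move=> [_ cover dec]; split=> [j k jk _ | t t_out j jm]; first exact: dec.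
have [-> | t_neq0] := eqVneq (estar t x) 0; first by rewrite normr0.
have [k pik] := cover _ t_neq0; have mk : (m <= k)%N.
  by rewrite leqNgt; apply: contra t_out => km; rewrite -pik map_f // mem_iota.
by rewrite -pik; apply: dec; apply: ltnW (leq_trans jm mk).
Qed.

Lemma greedy_ordering_strictly_greedy_prefix x rho pi m :
  greedy_ordering estar x rho -> injective pi -> strictly_greedy_prefix x pi m ->
  forall j, (j < m)%N -> rho j = pi j.
Proof.
move=> [rho_inj cover dec] pi_inj [nz strict out].
elim/ltn_ind => j IH jm; have [k rho_k] := cover _ (nz j jm).
have jk : (j <= k)%N.
  rewrite leqNgt; apply/negP => kj; have := IH k kj (ltn_trans kj jm).
  by rewrite rho_k => /pi_inj k_eq; rewrite k_eq ltnn in kj.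
have le_j : `|estar (pi j) x| <= `|estar (rho j) x| by rewrite -rho_k; apply: dec.
have [/mapP [i] | rho_out] := boolP (rho j \in map pi (iota 0 m)); last first.
  by have := le_lt_trans le_j (out _ rho_out j jm); rewrite ltxx.
rewrite mem_iota /= => im rho_j; case: (ltngtP i j) => [ij | ji | ij_eq].
- have := IH i ij (ltn_trans ij jm); rewrite -rho_j => /rho_inj i_eq.
  by rewrite i_eq ltnn in ij.
- by move: le_j; rewrite rho_j => /le_lt_trans/(_ (strict _ _ ji im)); rewrite ltxx.
- by rewrite rho_j ij_eq.
Qed.

Section FiniteSupport.
Variables (x : X) (rho : nat -> nat) (s : seq nat).
Hypotheses (rho_greedy : greedy_ordering estar x rho) (s_uniq : uniq s)
  (supp_s : forall n, estar n x != 0 <-> n \in s).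

Lemma greedy_ordering_support_neq0 j : (j < size s)%N -> estar (rho j) x != 0.
Proof.
have [_ cover dec] := rho_greedy; move=> js; apply/negP => /eqP rho_j0.
have : {subset s <= map rho (iota 0 j)}.
  move=> n /supp_s n_neq0; have [k rho_k] := cover _ n_neq0.
  apply/mapP; exists k => //; rewrite mem_iota /= ltnNge; apply/negP => jk.
  by move: (dec _ _ jk); rewrite rho_j0 normr0 rho_k normr_le0 (negbTE n_neq0).
move=> /(uniq_leq_size s_uniq); rewrite size_map size_iota => sj.
by move: (leq_ltn_trans sj js); rewrite ltnn.
Qed.

Lemma greedy_ordering_support : map rho (iota 0 (size s)) =i s.
Proof.
have [rho_inj _ _] := rho_greedy.
have rho_uniq : uniq (map rho (iota 0 (size s))).
  by rewrite (map_inj_uniq rho_inj) iota_uniq.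
apply: (uniq_min_size rho_uniq _ _).2.
- move=> n /mapP [j]; rewrite mem_iota => /= js ->.
  exact/supp_s/greedy_ordering_support_neq0.
- by rewrite size_map size_iota.
Qed.

Lemma lattice_strictly_greedy_support :
  lattice_strictly_greedy estar rho (size s) x ->
  strictly_greedy_prefix x rho (size s).
Proof.
have [_ _ dec] := rho_greedy; move=> distinct.
split => [|i j ij js|t t_out j js]; first exact: greedy_ordering_support_neq0.
  rewrite lt_neqAle (dec _ _ (ltnW ij)) andbT eq_sym.
  have i_lt := ltn_trans ij js.
  apply: distinct i_lt js _ (greedy_ordering_support_neq0 i_lt).
  by move=> ij_eq; rewrite ij_eq ltnn in ij.
have /eqP -> : estar t x == 0.
  by apply: contraR t_out => /supp_s; rewrite -greedy_ordering_support.
by rewrite normr0 normr_gt0 greedy_ordering_support_neq0.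
Qed.

End FiniteSupport.

Lemma strictly_greedy_prefix_lattice x rho pi m :
  greedy_ordering estar x rho -> injective pi -> strictly_greedy_prefix x pi m ->
  lattice_strictly_greedy estar rho m x.
Proof.
move=> rho_greedy pi_inj pi_strict i j im jm ij _.
have [_ strict _] := pi_strict.
rewrite !(greedy_ordering_strictly_greedy_prefix rho_greedy pi_inj pi_strict) //.
case: (ltngtP i j) => [i_lt_j | j_lt_i | /ij //].
  by rewrite gt_eqF // strict.
by rewrite lt_eqF // strict.
Qed.

End GreedyOrderings.

Lemma ler_norm_sum_const (R : numDomainType) (V : normedZmodType R) n
    (u : 'I_n -> V) (K : R) :
  (forall i, `|u i| <= K) -> `|\sum_(i < n) u i| <= n%:R * K.
Proof.
move=> uK; apply: le_trans (ler_norm_sum _ _ _) _.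
apply: le_trans (ler_sum _ (fun i _ => uK i)) _.
by rewrite sumr_const card_ord mulr_natl.
Qed.

Section PushedCoefficients.
Variables (R : realDomainType) (c : nat -> R) (A : seq nat) (d : R).
Hypothesis d_ge0 : 0 <= d.

(* Entries outside [A] have [index k A = size A] and are left unchanged; along
   [A] the push strictly decreases, which breaks the ties among them. *)
Definition pushed_coef (k : nat) : R :=
  let t := d * (size A - index k A)%:R in c k + (if 0 <= c k then t else - t).

Lemma norm_pushed_coef k : `|pushed_coef k| = `|c k| + d * (size A - index k A)%:R.
Proof.
rewrite /pushed_coef; set t := _ * _; have t_ge0 : 0 <= t by rewrite mulr_ge0.
case: ifP => [ck_ge0 | /negbT]; first by rewrite !ger0_norm ?addr_ge0.
by rewrite -ltNge => ck_lt0; rewrite (ltr0_norm ck_lt0) ltr0_norm; lra.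
Qed.

Lemma pushed_coef_notin k : k \notin A -> pushed_coef k = c k.
Proof.
by move=> kA; rewrite /pushed_coef memNindex // subnn mulr0 oppr0 if_same addr0.
Qed.

Lemma norm_pushed_coefB k : `|pushed_coef k - c k| <= d * (size A)%:R.
Proof.
rewrite /pushed_coef addrAC subrr add0r; set t := _ * _.
have -> : `|if 0 <= c k then t else - t| = t.
  by case: ifP; rewrite ?normrN ger0_norm // mulr_ge0.
by rewrite ler_wpM2l // ler_nat leq_subr.
Qed.

End PushedCoefficients.

Section GreedySums.
Variables (R : realType) (X : normedModType R) (join : X -> X -> X)
  (e : nat -> X) (estar : nat -> X -> R).

Lemma GveeE pi m x : Gvee e estar join pi m x =
  bigjoin_abs join (fun n => Gsum e estar pi n.+1 x) (iota 0 m).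
Proof. by []. Qed.

Lemma Gvee_eq_prefix pi pi' m x : (forall j, (j < m)%N -> pi j = pi' j) ->
  Gvee e estar join pi m x = Gvee e estar join pi' m x.
Proof.
move=> pi_pi'; rewrite !GveeE; apply: eq_bigjoin_abs => n; rewrite mem_iota /= => nm.
by apply: eq_bigr => i _; rewrite pi_pi' // (leq_trans (ltn_ord i) nm).
Qed.

Lemma Gvee_strictly_greedy_prefix x rho pi m :
  greedy_ordering estar x rho -> injective pi ->
  strictly_greedy_prefix estar x pi m ->
  Gvee e estar join rho m x = Gvee e estar join pi m x.
Proof.
move=> rho_greedy pi_inj pi_strict; apply: Gvee_eq_prefix.
exact: greedy_ordering_strictly_greedy_prefix rho_greedy pi_inj pi_strict.
Qed.

End GreedySums.

Section Perturbation.
Variables (R : realType) (X : normedModType R) (le : X -> X -> Prop)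
  (join : X -> X -> X) (e : nat -> X) (estar : nat -> X -> R) (b : R).
Hypotheses (HL : normed_lattice le join) (Hb : basic_seq e)
  (Hcf : coefficient_functionals e estar) (e_le : forall k, `|e k| <= b).
Variables (x : X) (pi : nat -> nat) (m : nat).
Hypotheses (Ex : closed_span e x) (pi_inj : injective pi)
  (pi_greedy : greedy_prefix estar x pi m).

Let b_ge0 : 0 <= b. Proof. exact: le_trans (normr_ge0 _) (e_le 0). Qed.

Let A := map pi (iota 0 m).
Let c k := estar k x.
Let perturbation N d := \sum_(k < N) pushed_coef c A d k *: e k.

Let size_A : size A = m.
Proof. by rewrite size_map size_iota. Qed.

Lemma estar_perturbation N d k :
  estar k (perturbation N d) = if (k < N)%N then pushed_coef c A d k else 0.
Proof. exact: estar_sum Hb Hcf (pushed_coef c A d) N k. Qed.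

Lemma norm_pushed_coef_pi d j : 0 <= d -> (j < m)%N ->
  `|pushed_coef c A d (pi j)| = `|c (pi j)| + d * (m - j)%:R.
Proof.
move=> d_ge0 jm; rewrite norm_pushed_coef // size_A index_map //.
have := index_uniq 0 (i := j) (s := iota 0 m).
by rewrite size_iota nth_iota // add0n => ->; rewrite ?iota_uniq.
Qed.

Lemma perturbation_strictly_greedy N d : 0 < d ->
  (forall j, (j < m)%N -> (pi j < N)%N) ->
  strictly_greedy_prefix estar (perturbation N d) pi m.
Proof.
move=> d_gt0 piN; have [dec out] := pi_greedy.
have w_gt0 j : (j < m)%N -> 0 < d * (m - j)%:R.
  by move=> jm; rewrite mulr_gt0 // ltr0n subn_gt0.
split => [j jm | i j ij jm | t t_out j jm].
- rewrite estar_perturbation piN // -normr_gt0 norm_pushed_coef_pi ?ltW //.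
  exact: ltr_wpDl (normr_ge0 _) (w_gt0 _ jm).
- have im := ltn_trans ij jm.
  rewrite !estar_perturbation !piN // !norm_pushed_coef_pi ?ltW //.
  by apply: ler_ltD (dec _ _ (ltnW ij) jm) _; rewrite ltr_pM2l // ltr_nat; lia.
- rewrite !estar_perturbation piN // norm_pushed_coef_pi ?ltW //.
  have := w_gt0 _ jm; have := out t t_out j jm; rewrite /c.
  case: ifP => _; last by rewrite normr0; have := normr_ge0 (estar (pi j) x); lra.
  by rewrite pushed_coef_notin //; lra.
Qed.

Lemma perturbation_support N d k : estar k (perturbation N d) != 0 ->
  (k < N)%N /\ (k \in A \/ estar k x != 0).
Proof.
rewrite estar_perturbation; case: ifP => [kN | _]; last by rewrite eqxx.
have [kA | kA] := boolP (k \in A); first by split; [|left].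
by rewrite pushed_coef_notin //; split; [|right].
Qed.

Lemma norm_perturbationB N d : 0 <= d ->
  `|perturbation N d - \sum_(k < N) estar k x *: e k| <= d * (N%:R * (m%:R * b)).
Proof.
move=> d_ge0; rewrite -sumrB mulrCA; apply: ler_norm_sum_const => k.
rewrite -scalerBl normrZ mulrA; apply: ler_pM => //.
by rewrite -size_A; apply: norm_pushed_coefB.
Qed.

Lemma norm_Gvee_perturbationB N d : 0 <= d ->
  (forall j, (j < m)%N -> (pi j < N)%N) ->
  `|Gvee e estar join pi m x - Gvee e estar join pi m (perturbation N d)|
    <= d * (m%:R * (m%:R * (m%:R * b))).
Proof.
move=> d_ge0 piN; rewrite !GveeE mulrCA.
apply: le_trans (norm_bigjoin_absB HL (K := m%:R * (d * (m%:R * b))) _) _.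
  move=> n; rewrite mem_iota /= => nm; rewrite /Gsum -sumrB.
  apply: le_trans (ler_norm_sum_const (K := d * (m%:R * b)) _) _.
    move=> i; have im : (i < m)%N by apply: leq_trans (ltn_ord i) nm.
    rewrite -scalerBl normrZ estar_perturbation piN // distrC mulrA.
    by apply: ler_pM => //; rewrite -size_A; apply: norm_pushed_coefB.
  by apply: ler_wpM2r; [rewrite mulr_ge0 // mulr_ge0 | rewrite ler_nat].
by rewrite size_iota [_ * (d * _)]mulrCA.
Qed.

Lemma exists_perturbation (eps : R) : 0 < eps ->
  exists N y, [/\ closed_span e y, `|y| <= `|x| + eps,
    `|Gvee e estar join pi m x - Gvee e estar join pi m y| <= eps,
    strictly_greedy_prefix estar y pi m &
    forall k, estar k y != 0 -> (k < N)%N /\ (k \in A \/ estar k x != 0)].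
Proof.
move=> eps_gt0.
have /cvgrPdist_lt /(_ (eps / 2)) [|N0 _ near_x] := Hcf Ex; first by rewrite divr_gt0.
pose N := maxn N0 (\max_(i < m) (pi i).+1).
have piN j : (j < m)%N -> (pi j < N)%N.
  move=> jm; apply: leq_trans (leq_maxr N0 _).
  exact: (leq_bigmax (F := fun i : 'I_m => (pi i).+1) (Ordinal jm)).
pose K1 := N%:R * (m%:R * b); pose K2 := m%:R * (m%:R * (m%:R * b)).
have K1_ge0 : 0 <= K1 by rewrite !mulr_ge0.
have K2_ge0 : 0 <= K2 by rewrite !mulr_ge0.
(* small enough for both error terms [d * K1] and [d * K2] to be [<= eps / 2] *)
pose d := eps / (2 * (K1 + K2 + 1)).
have d_gt0 : 0 < d by rewrite divr_gt0 // mulr_gt0 //; lra.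
have dK : d * (2 * (K1 + K2 + 1)) = eps by rewrite mulfVK //; lra.
have dK1 : d * K1 <= eps / 2.
  have := mulr_ge0 (ltW d_gt0) K2_ge0; rewrite !mulrDr mulr1 in dK; lra.
have dK2 : d * K2 <= eps.
  have := mulr_ge0 (ltW d_gt0) K1_ge0; rewrite !mulrDr mulr1 in dK; lra.
exists N, (perturbation N d); split.
- exact: closed_span_sum.
- set S := \sum_(k < N) estar k x *: e k.
  have := norm_perturbationB N (ltW d_gt0); rewrite -/K1 => yS.
  have := near_x N (leq_maxl _ _); rewrite /= -/S distrC => Sx.
  have -> : perturbation N d = (perturbation N d - S) + (S - x) + x.
    by rewrite addrA subrK subrK.
  have := ler_normD (perturbation N d - S + (S - x)) x.
  have := ler_normD (perturbation N d - S) (S - x); lra.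
- by apply: le_trans (norm_Gvee_perturbationB (ltW d_gt0) piN) _.
- exact: perturbation_strictly_greedy.
- exact: perturbation_support.
Qed.

End Perturbation.

Lemma ler_mul_approx (R : realFieldType) (C a b : R) : 0 <= C ->
  (forall eps, 0 < eps -> a <= C * (b + eps) + eps) -> a <= C * b.
Proof.
move=> C_ge0 approx; apply/ler_addgt0Pr => eps eps_gt0.
have C1_neq0 : C + 1 != 0 by rewrite lt0r_neq0 //; lra.
have eps'_gt0 : 0 < eps / (C + 1) by rewrite divr_gt0 //; lra.
by have := approx _ eps'_gt0; rewrite (_ : C * _ + _ = C * b + eps) //; field.
Qed.

Lemma exists_support_seq (V : zmodType) (f : nat -> V) N :
  (forall k, f k != 0 -> (k < N)%N) ->
  exists2 s : seq nat, uniq s & forall k, f k != 0 <-> k \in s.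
Proof.
move=> fN; exists [seq k <- iota 0 N | f k != 0].
  by rewrite filter_uniq ?iota_uniq.
move=> k; rewrite mem_filter mem_iota /=.
by split => [fk | /andP [] //]; rewrite fk fN.
Qed.

Section GreedyBounds.
Variables (R : realType) (X : normedModType R) (le : X -> X -> Prop)
  (join : X -> X -> X) (e : nat -> X) (estar : nat -> X -> R).
Hypotheses (HL : normed_lattice le join) (Hsn : semi_normalized e)
  (Hb : basic_seq e) (Hcf : coefficient_functionals e estar).

Lemma nat_greedyP x : closed_span e x ->
  natural_greedy_ordering estar x (nat_greedy estar x).
Proof.
move=> Ex; apply: (epsilon_spec (inhabits id) (natural_greedy_ordering estar x)).
exact: natural_greedy_ordering_exists (estar_small Hcf Hsn Ex).
Qed.

Lemma nat_greedyZ (r : R) x : 0 < r -> closed_span e x ->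
  nat_greedy estar (r *: x) = nat_greedy estar x.
Proof.
move=> r_gt0 Ex; have r_neq0 := lt0r_neq0 r_gt0; rewrite /nat_greedy.
have rx k : estar k (r *: x) = r * estar k x.
  exact: (estarZ Hb Hcf r k Ex).
have xr k : estar k x = r^-1 * estar k (r *: x) by rewrite rx mulKf.
suff -> : natural_greedy_ordering estar (r *: x) = natural_greedy_ordering estar x.
  by [].
apply/funext => rho; apply/propext.
split; first exact: natural_greedy_ordering_scale (invr_neq0 r_neq0) xr.
exact: natural_greedy_ordering_scale r_neq0 rx.
Qed.

Lemma NGveeZ (r : R) x m : 0 < r -> closed_span e x ->
  NGvee e estar join m (r *: x) = r *: NGvee e estar join m x.
Proof.
move=> r_gt0 Ex; rewrite /NGvee nat_greedyZ // !GveeE -(bigjoin_absZ HL) //.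
apply: eq_bigjoin_abs => n _; rewrite /Gsum scaler_sumr; apply: eq_bigr => i _.
by rewrite (estarZ Hb Hcf) // scalerA.
Qed.

Lemma NGvee0 m : NGvee e estar join m 0 = 0.
Proof.
rewrite /NGvee GveeE (@eq_bigjoin_abs _ _ join _ (fun=> 0)) ?(bigjoin_abs0 HL) //.
move=> n _.
by rewrite /Gsum big1 // => i _; rewrite (estar0 Hb Hcf) scale0r.
Qed.

Lemma exists_greedy_perturbation x pi m (eps : R) :
  closed_span e x -> injective pi -> greedy_prefix estar x pi m -> 0 < eps ->
  exists N y, [/\ closed_span e y, `|y| <= `|x| + eps,
    `|Gvee e estar join pi m x| <= `|NGvee e estar join m y| + eps,
    strictly_greedy_prefix estar y pi m &
    forall k, estar k y != 0 ->
      (k < N)%N /\ (k \in map pi (iota 0 m) \/ estar k x != 0)].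
Proof.
move=> Ex pi_inj pi_greedy eps_gt0; have [a [b [_ e_bd]]] := Hsn.
have e_le k : `|e k| <= b by have /andP [] := e_bd k.
have [N [y [Ey y_le Gvee_le strict supp_y]]] :=
  exists_perturbation HL Hb Hcf e_le Ex pi_inj pi_greedy eps_gt0.
exists N, y; split => //.
rewrite /NGvee (Gvee_strictly_greedy_prefix _ _ (nat_greedyP Ey).1 pi_inj strict).
set Gx := Gvee e estar join pi m x; set Gy := Gvee e estar join pi m y.
by have := ler_normD (Gx - Gy) Gy; rewrite subrK; lra.
Qed.

Variable C : R.

Definition greedy_bounded :=
  forall x, closed_span e x -> forall m, (0 < m)%N ->
  forall pi, greedy_ordering estar x pi -> `|Gvee e estar join pi m x| <= C * `|x|.

Definition natural_greedy_bounded :=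
  forall x, closed_span e x -> forall m, (0 < m)%N ->
  `|NGvee e estar join m x| <= C * `|x|.

Definition exists_greedy_bounded :=
  forall x, closed_span e x -> forall m, (0 < m)%N ->
  exists pi, greedy_ordering estar x pi /\ `|Gvee e estar join pi m x| <= C * `|x|.

Definition strictly_greedy_support_bounded := forall x, closed_span e x ->
  forall s : seq nat, uniq s -> (forall n, estar n x != 0 <-> n \in s) ->
  lattice_strictly_greedy estar (nat_greedy estar x) (size s) x ->
  `|NGvee e estar join (size s) x| <= C * `|x|.

Definition support_greedy_bounded := forall x, closed_span e x ->
  forall s : seq nat, uniq s -> (forall n, estar n x != 0 <-> n \in s) ->
  `|NGvee e estar join (size s) x| <= C * `|x|.

Definition NGvee_norm (m : nat) : \bar R :=
  ereal_sup [set (`|NGvee e estar join m x|)%:E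
            | x in [set x | closed_span e x /\ `|x| = 1]].

Hypothesis C_ge0 : 0 <= C.

Lemma greedy_bounded_natural : greedy_bounded -> natural_greedy_bounded.
Proof. by move=> bd x Ex m m_gt0; apply: bd m_gt0 _ (nat_greedyP Ex).1. Qed.

Lemma natural_greedy_bounded_exists :
  natural_greedy_bounded -> exists_greedy_bounded.
Proof.
move=> bd x Ex m m_gt0; exists (nat_greedy estar x).
by split; [exact: (nat_greedyP Ex).1 | exact: bd].
Qed.

Lemma exists_greedy_bounded_strict :
  exists_greedy_bounded -> strictly_greedy_support_bounded.
Proof.
move=> bd x Ex s s_uniq supp_s distinct.
have rho_greedy := (nat_greedyP Ex).1; have [rho_inj _ _] := rho_greedy.
have [s0 | s_gt0] := posnP (size s).
  by rewrite /NGvee /Gvee s0 normr0 mulr_ge0.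
have [pi [pi_greedy pi_bd]] := bd x Ex _ s_gt0.
have strict := lattice_strictly_greedy_support rho_greedy s_uniq supp_s distinct.
by rewrite /NGvee -(Gvee_strictly_greedy_prefix _ _ pi_greedy rho_inj strict).
Qed.

Lemma strictly_greedy_support_bounded_support :
  strictly_greedy_support_bounded -> support_greedy_bounded.
Proof.
move=> bd x Ex s s_uniq supp_s.
have rho_greedy := (nat_greedyP Ex).1; have [rho_inj _ _] := rho_greedy.
apply: ler_mul_approx C_ge0 _ => eps eps_gt0.
have [N [y [Ey y_le G_le strict supp_y]]] := exists_greedy_perturbation Ex rho_inj
  (greedy_ordering_prefix (size s) rho_greedy) eps_gt0.
set A := map (nat_greedy estar x) (iota 0 (size s)) in supp_y.
have supp_A k : estar k y != 0 <-> k \in A.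
  split => [/supp_y [_ [//| /supp_s]] | /mapP [j]].
    by rewrite -(greedy_ordering_support rho_greedy s_uniq supp_s).
  by rewrite mem_iota => /= js ->; have [nz _ _] := strict; apply: nz.
have A_uniq : uniq A by rewrite (map_inj_uniq rho_inj) iota_uniq.
have y_distinct := strictly_greedy_prefix_lattice (nat_greedyP Ey).1 rho_inj strict.
have := bd y Ey A A_uniq supp_A; rewrite size_map size_iota => /(_ y_distinct).
have := ler_wpM2l C_ge0 y_le; rewrite -/(NGvee e estar join (size s) x) in G_le.
lra.
Qed.

Lemma support_greedy_bounded_all : support_greedy_bounded -> greedy_bounded.
Proof.
move=> bd x Ex m _ pi pi_greedy; have [pi_inj _ _] := pi_greedy.
apply: ler_mul_approx C_ge0 _ => eps eps_gt0.
have [N [y [Ey y_le G_le strict supp_y]]] := exists_greedy_perturbation Ex pi_inj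
  (greedy_ordering_prefix m pi_greedy) eps_gt0.
have [s s_uniq supp_s] :=
  exists_support_seq (f := fun k => estar k y) (fun k yk => (supp_y k yk).1).
have m_le : (m <= size s)%N.
  have pi_uniq : uniq (map pi (iota 0 m)) by rewrite (map_inj_uniq pi_inj) iota_uniq.
  have := uniq_leq_size pi_uniq; rewrite size_map size_iota; apply.
  move=> k /mapP [j]; rewrite mem_iota => /= jm ->.
  by have [nz _ _] := strict; apply/supp_s/nz.
have := norm_bigjoin_abs_iota HL
  (fun n => Gsum e estar (nat_greedy estar y) n.+1 y) m_le.
rewrite -!GveeE -/(NGvee e estar join m y) -/(NGvee e estar join (size s) y).
have := bd y Ey s s_uniq supp_s; have := ler_wpM2l C_ge0 y_le; lra.
Qed.

Lemma natural_greedy_bounded_sup : natural_greedy_bounded <->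
  (ereal_sup [set NGvee_norm m | m in [set m : nat | (0 < m)%N]] <= C%:E)%E.
Proof.
split => [bd | sup_le x Ex m m_gt0].
  apply: ge_ereal_sup => _ [m m_gt0 <-]; apply: ge_ereal_sup => _ [x [Ex x1] <-].
  by rewrite lee_fin -[C]mulr1 -x1; apply: bd.
have [-> | x_neq0] := eqVneq x 0; first by rewrite NGvee0 !normr0 mulr0.
have nx_gt0 : 0 < `|x| by rewrite normr_gt0.
have nx_inv_ge0 : 0 <= `|x|^-1 by rewrite invr_ge0 ltW.
pose u := `|x|^-1 *: x.
have u1 : `|u| = 1 by rewrite normrZ (ger0_norm nx_inv_ge0) mulVf // lt0r_neq0.
have : ((`|NGvee e estar join m u|)%:E <= C%:E)%E.
  have NG_le : ((`|NGvee e estar join m u|)%:E <= NGvee_norm m)%E.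
    apply: ereal_sup_ge; exists (`|NGvee e estar join m u|)%:E => //.
    by exists u => //; split => //; apply: (closed_spanZ Hcf).
  apply: le_trans NG_le (le_trans _ sup_le).
  by apply: ereal_sup_ge; exists (NGvee_norm m) => //; exists m.
rewrite lee_fin NGveeZ ?invr_gt0 // normrZ (ger0_norm nx_inv_ge0).
by move=> NGu_le; rewrite -ler_pdivrMr // mulrC.
Qed.

End GreedyBounds.

Theorem lemma3p1 (R : realType) (X : completeNormedModType R)
  (le : X -> X -> Prop) (join : X -> X -> X)
  (e : nat -> X) (estar : nat -> X -> R) :
  normed_lattice le join ->
  semi_normalized e -> basic_seq e -> coefficient_functionals e estar ->
  forall C : R, 0 < C ->
  let E := closed_span e in
  let P1 := forall x, E x -> forall m : nat, (0 < m)%N ->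
      forall pi, greedy_ordering estar x pi ->
      `|Gvee e estar join pi m x| <= C * `|x| in
  let P2 := forall x, E x -> forall m : nat, (0 < m)%N ->
      `|NGvee e estar join m x| <= C * `|x| in
  let P3 := forall x, E x -> forall m : nat, (0 < m)%N ->
      exists pi, greedy_ordering estar x pi /\
      `|Gvee e estar join pi m x| <= C * `|x| in
  let P4 := forall x, E x -> forall s : seq nat, uniq s ->
      (forall n, estar n x != 0 <-> n \in s) ->
      lattice_strictly_greedy estar (nat_greedy estar x) (size s) x ->
      `|NGvee e estar join (size s) x| <= C * `|x| in
  let P5 := forall x, E x -> forall s : seq nat, uniq s ->
      (forall n, estar n x != 0 <-> n \in s) ->
      `|NGvee e estar join (size s) x| <= C * `|x| in
  let normNGvee (m : nat) : \bar R :=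
      ereal_sup [set (`|NGvee e estar join m x|)%:E | x in [set x | E x /\ `|x| = 1]] in
  let supnorm : \bar R := ereal_sup [set normNGvee m | m in [set m : nat | (0 < m)%N]] in
  [<-> P1; P2; P3; P4; P5] /\ (P2 <-> (supnorm <= C%:E)%E).
Proof.
move=> HL Hsn Hb Hcf C C_gt0 E P1 P2 P3 P4 P5 normNGvee supnorm.
have C_ge0 := ltW C_gt0.
split; last exact: natural_greedy_bounded_sup HL Hb Hcf C.
tfae.
- exact: (greedy_bounded_natural Hsn Hcf (C := C)).
- exact: (natural_greedy_bounded_exists Hsn Hcf (C := C)).
- exact: (exists_greedy_bounded_strict Hsn Hcf C_ge0).
- exact: (strictly_greedy_support_bounded_support HL Hsn Hb Hcf C_ge0).
- exact: (support_greedy_bounded_all HL Hsn Hb Hcf C_ge0).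
Qed.
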